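(* The following statements are equivalent: (1) $\omega_1<\mathfrak d$; (2) every $T_1$ space of cardinality $\omega_1$ having countable extent is set strongly star Menger.
   Context: For a family $\mathcal U$ of subsets of $X$ and $A\subseteq X$, $st(A,\mathcal U)=\bigcup\{U\in\mathcal U: U\cap A\neq\emptyset\}$. $X$ is set strongly star Menger if for every nonempty $A\subseteq X$ and every sequence $(\mathcal U_n:n\in\omega)$ of families of open sets with $\overline A\subseteq\bigcup\mathcal U_n$ for all $n$, there are finite $F_n\subseteq\overline A$ with $A\subseteq\bigcup_n st(F_n,\mathcal U_n)$. A space has countable extent if every closed discrete subset is countable. $\mathfrak d$ is the minimal cardinality of a cofinal subset of $(\omega^\omega,\leq^* )$. *)

From HB Require Import structures.
From mathcomp Require Import all_boot all_order.
From mathcomp Require Import boolp classical_sets functions cardinality.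
From mathcomp Require Import topology.
Set Implicit Arguments. Unset Strict Implicit. Unset Printing Implicit Defensive.
Local Open Scope classical_set_scope.

(* |A| <= omega_1 : A carries a strict well-order all of whose proper
   initial segments are countable (i.e. of order type <= omega_1). *)
Definition card_le_omega1 {T : Type} (A : set T) : Prop :=
  exists R : T -> T -> Prop,
    (forall x, A x -> ~ R x x) /\
    (forall x y z, A x -> A y -> A z -> R x y -> R y z -> R x z) /\
    (forall x y, A x -> A y -> x <> y -> R x y \/ R y x) /\
    (forall B : set T, B `<=` A -> B !=set0 ->
        exists2 m, B m & forall y, B y -> ~ R y m) /\
    (forall x, A x -> countable [set y | A y /\ R y x]).

Definition card_eq_omega1 {T : Type} (A : set T) : Prop :=
  card_le_omega1 A /\ ~ countable A.

Definition le_star (g f : nat -> nat) : Prop :=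
  exists N, forall n, (N <= n)%N -> (g n <= f n)%N.

Definition cofinal_family (D : set (nat -> nat)) : Prop :=
  forall g, exists2 f, D f & le_star g f.

(* omega_1 < d : no cofinal family has cardinality <= omega_1 *)
Definition omega1_lt_dominating : Prop :=
  forall D : set (nat -> nat), cofinal_family D -> ~ card_le_omega1 D.

Definition closed_discrete {T : topologicalType} (A : set T) : Prop :=
  closed A /\
  (forall x, A x -> exists U : set T, open U /\ U x /\ U `&` A = [set x]).

Definition countable_extent (T : topologicalType) : Prop :=
  forall A : set T, closed_discrete A -> countable A.

Definition star {T : Type} (A : set T) (U : set (set T)) : set T :=
  [set x | exists V, U V /\ V `&` A !=set0 /\ V x].

Definition set_strongly_star_Menger (T : topologicalType) : Prop :=
  forall A : set T, A !=set0 ->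
  forall Us : nat -> set (set T),
    (forall n V, Us n V -> open V) ->
    (forall n, closure A `<=` \bigcup_(V in Us n) V) ->
    exists F : nat -> set T,
      (forall n, finite_set (F n) /\ F n `<=` closure A) /\
      A `<=` \bigcup_n star (F n) (Us n).

From HB Require Import structures.
From mathcomp Require Import all_boot boolp classical_sets functions cardinality topology.
Set Implicit Arguments. Unset Strict Implicit. Unset Printing Implicit Defensive.
Local Open Scope classical_set_scope.

(* (1) -> (2): for each n, a maximal subset of cl A no two points of which lie
   in a common member of U_n is closed discrete, hence countable, and its star
   covers cl A.  Enumerating these sets, every x in A gives h_x : nat -> nat,
   where h_x(n) indexes a point whose U_n-star contains x.  There are at most
   omega_1 such h_x, so some g is dominated by none of them, and taking for F_n
   the first g(n) points of the n-th set works.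
   (2) -> (1): for a cofinal D of size <= omega_1, D x omega embedded in Baire
   space is a T_1, second countable space of size omega_1.  It is not set
   strongly star Menger: against the covers by the sets {x | x(n+1) = m}, finite
   choices F_n are bounded by some G, and a point exceeding G everywhere escapes
   all the stars. *)

Lemma countable_range {T : Type} (D : set T) :
  countable D -> D !=set0 -> exists e : nat -> T, range e = D.
Proof.
move=> /pfcard_geP[->|[e]]; first by case.
move=> _; exists e; apply/seteqP; split; last exact: surj.
by move=> _ [n _ <-]; apply: funS.
Qed.

Lemma countable_setU {T : Type} (A B : set T) :
  countable A -> countable B -> countable (A `|` B).
Proof.
by move=> cA cB; rewrite -bigcup2E; apply: bigcup_countable => // -[|[|]].
Qed.

Lemma card_le_omega1_inj {S T : Type} (A : set S) (B : set T) (psi : T -> S) :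
  {in B &, injective psi} -> (forall x, B x -> A (psi x)) ->
  card_le_omega1 A -> card_le_omega1 B.
Proof.
move=> psi_inj BA [R [Rirr [Rtr [Rtot [Rmin Rcnt]]]]].
exists (fun x y => R (psi x) (psi y)); split; [|split; [|split; [|split]]].
- by move=> x Bx; apply: Rirr; apply: BA.
- by move=> x y z Bx By Bz; apply: Rtr; apply: BA.
- move=> x y Bx By xy; apply: Rtot; try exact: BA.
  by move=> /psi_inj; rewrite !inE => /(_ Bx By).
- move=> B' B'B [b B'b].
  have [||_ [b' B'b' <-] mmin] := Rmin (psi @` B').
  - by move=> _ [y /B'B/BA ? <-].
  - by exists (psi b), b.
  by exists b' => // y B'y; apply: mmin; exists y.
- move=> x Bx; have /countable_injP[f finj] := Rcnt _ (BA _ Bx).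
  apply/countable_injP; exists (f \o psi) => y z; rewrite !inE => -[By Ry] [Bz Rz] /= e.
  by apply: psi_inj; rewrite ?inE //; apply: finj; rewrite ?inE //; split=> //; exact: BA.
Qed.

Lemma card_le_omega1_image {S T : Type} (A : set S) (f : S -> T) :
  card_le_omega1 A -> card_le_omega1 (f @` A).
Proof.
have [->|/set0P[x0 _]] := eqVneq A set0.
  rewrite image_set0 => _; exists (fun _ _ => False).
  by do 4!split=> //; move=> B; rewrite subset0 => -> [].
have /choice[sec hsec] : forall y, exists x, (f @` A) y -> A x /\ f x = y.
  by move=> y; have [[x Ax <-]|nfy] := EM ((f @` A) y); [exists x | exists x0].
apply: (card_le_omega1_inj (psi := sec)) => [|y /hsec[]//].
by move=> y1 y2; rewrite !inE => /hsec[_ e1] /hsec[_ e2] e; rewrite -e1 -e2 e.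
Qed.

Lemma card_le_omega1_setXT {S : Type} (A : set S) :
  card_le_omega1 A -> card_le_omega1 (A `*` [set: nat]).
Proof.
move=> [R [Rirr [Rtr [Rtot [Rmin Rcnt]]]]].
exists (fun p q => R p.1 q.1 \/ p.1 = q.1 /\ (p.2 < q.2)%N).
split; [|split; [|split; [|split]]].
- by move=> [x i] [/= Ax _] [/(Rirr _ Ax)|[_]]; rewrite ?ltnn.
- move=> [x i] [y j] [z k] [/= Ax _] [/= Ay _] [/= Az _] /=.
  case=> [Rxy|[-> ij]] [Ryz|[yz jk]]; first by left; exact: Rtr Rxy Ryz.
  + by left; rewrite -yz.
  + by left.
  + by right; split; [|exact: ltn_trans jk].
- move=> [x i] [y j] [/= Ax _] [/= Ay _] /= xy.
  have [exy|nxy] := EM (x = y); last first.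
    by case: (Rtot _ _ Ax Ay nxy) => ?; [left|right]; left.
  subst y; case: (ltngtP i j) => [ij|ji|ij]; [by left; right|by right; right|by subst j].
- move=> B BA [b Bb].
  have [||_ [[m k] Bmk <-] mmin] := Rmin (fst @` B).
  + by move=> _ [y /BA[Ay _] <-].
  + by exists b.1, b.
  have /ex_minnP[i /asboolP Bmi imin] : exists i, `[< B (m, i) >].
    by exists k; apply/asboolP.
  exists (m, i) => // -[y j] Byj /= [Rym|[ym ji]].
    by apply: (mmin y) Rym; exists (y, j).
  by move: Byj; rewrite ym => /asboolP/imin; rewrite leqNgt ji.
- move=> [x i] [/= Ax _].
  apply: (@sub_countable _ _ _ (([set y | A y /\ R y x] `|` [set x]) `*` [set: nat])).
    by apply: subset_card_le => -[y j] /= [[Ay _] [Ryx|[-> _]]]; split=> //; [left|right].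
  by apply: countableX => //; apply: countable_setU; [exact: Rcnt|exact: countable1].
Qed.

Definition separated {T : Type} (U : set (set T)) (D : set T) : Prop :=
  forall a b, D a -> D b -> (exists V, U V /\ V a /\ V b) -> a = b.

Lemma maximal_separated {T : Type} (C : set T) (U : set (set T)) :
  C `<=` \bigcup_(V in U) V ->
  exists2 D, D `<=` C /\ separated U D & C `<=` star D U.
Proof.
move=> cov.
have [|D [[DC Dsep] Dmax]] := @Zorn_bigcup T (fun D => D `<=` C /\ separated U D).
  move=> F FP Ftot; split=> [x [X FX Xx]|a b [X FX Xa] [Y FY Yb]].
    by have [+ _] := FP _ FX; apply.
  have [XY|YX] := Ftot _ _ FX FY.
    by have [_ +] := FP _ FY; apply => //; apply: XY.
  by have [_ +] := FP _ FX; apply => //; apply: YX.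
exists D => // x Cx; apply/not_notP => nst.
have [V UV Vx] := cov _ Cx.
have Dx : ~ D x by move=> Dx; apply: nst; exists V; split=> //; split=> //; exists x.
apply: (Dmax (D `|` [set x])).
  by split=> [y Dy|/(_ x (or_intror erefl))//]; left.
split=> [y [/DC|->]//|a b [Da|->] [Db|->] [W [UW [Wa Wb]]]] //.
- by apply: Dsep => //; exists W.
- by exfalso; apply: nst; exists W; split=> //; split=> //; exists a.
- by exfalso; apply: nst; exists W; split=> //; split=> //; exists b.
Qed.

Lemma separated_closed_discrete (T : topologicalType) (C : set T) (U : set (set T)) D :
  accessible_space T -> closed C -> (forall V, U V -> open V) ->
  C `<=` \bigcup_(V in U) V -> D `<=` C -> separated U D -> closed_discrete D.
Proof.
move=> T1 clC opU cov DC Dsep; split => [x clDx|x Dx]; last first.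
  have [V UV Vx] := cov _ (DC _ Dx).
  exists V; split; first exact: opU.
  split=> //; apply/seteqP; split=> [y [Vy Dy]|y ->//].
  by apply: Dsep => //; exists V.
apply/not_notP => Dx; have Cx : C x by apply: clC => W /(clDx W) [d [/DC]]; exists d.
have [V UV Vx] := cov _ Cx.
have nV : nbhs x V by apply: open_nbhs_nbhs; split=> //; apply: opU.
have [d [Dd Vd]] := clDx _ nV.
have /T1[W [oW xW dW]] : x != d by apply/eqP => e; apply: Dx; rewrite e.
have nW : nbhs x W by apply: open_nbhs_nbhs; split=> //; rewrite -inE.
have [d' [Dd' [Vd' Wd']]] := clDx _ (filterI nV nW).
have e : d' = d by apply: Dsep => //; exists V.
by move: dW; rewrite inE /= -e.
Qed.

Lemma countable_star_cover (T : topologicalType) (C : set T) (U : set (set T)) :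
  accessible_space T -> countable_extent T -> closed C -> C !=set0 ->
  (forall V, U V -> open V) -> C `<=` \bigcup_(V in U) V ->
  exists e : nat -> T, range e `<=` C /\ C `<=` star (range e) U.
Proof.
move=> T1 ext clC [c Cc] opU cov.
have [D [DC Dsep] CD] := maximal_separated cov.
have cntD : countable D := ext _ (separated_closed_discrete T1 clC opU cov DC Dsep).
have [|e De] := countable_range cntD.
  by have [V [_ [VD _]]] := CD _ Cc; case: VD => d [_ Dd]; exists d.
by exists e; rewrite De.
Qed.

Lemma omega1_lt_d_undominated (I : Type) (A : set I) (h : I -> nat -> nat) :
  omega1_lt_dominating -> card_le_omega1 A ->
  exists g, forall x, A x -> exists n, (h x n < g n)%N.
Proof.
move=> hd cardA.
have /existsNP[g nleg] : ~ cofinal_family (h @` A).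
  by move=> cof; exact: hd cof (card_le_omega1_image h cardA).
exists g => x Ax; apply/not_existsP => hle.
apply: nleg; exists (h x); first by exists x.
by exists 0%N => n _; rewrite leqNgt; apply/negP/hle.
Qed.

Theorem set_strongly_star_Menger_of_omega1_lt_d : omega1_lt_dominating ->
  forall T : topologicalType, accessible_space T -> card_le_omega1 [set: T] ->
  countable_extent T -> set_strongly_star_Menger T.
Proof.
move=> hd T T1 cardT ext A [a Aa] Us opU cov.
have /choice[e he] n :
    exists e : nat -> T, range e `<=` closure A /\ closure A `<=` star (range e) (Us n).
  apply: countable_star_cover => //; first exact: closed_closure.
    by exists a; apply: subset_closure.
  exact: opU.
have /choice[h hh] x : exists h : nat -> nat, A x ->
    forall n, exists V, Us n V /\ V (e n (h n)) /\ V x.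
  have [Ax|nAx] := EM (A x); last by exists id => /nAx.
  have /choice[h hh] n : exists k, exists V, Us n V /\ V (e n k) /\ V x.
    have [V [UV [[y [Vy [k _ eky]]] Vx]]] := (he n).2 x (subset_closure Ax).
    by exists k, V; rewrite eky.
  by exists h.
have cardA : card_le_omega1 A by apply: (card_le_omega1_inj (psi := id)) cardT.
have [g hg] := omega1_lt_d_undominated h hd cardA.
exists (fun n => e n @` `I_(g n)); split=> [n|x Ax].
  split; first exact: finite_image.
  by move=> _ [k _ <-]; apply: (he n).1; exists k.
have [n ltn] := hg x Ax; have [V [UV [Vh Vx]]] := hh x Ax n.
exists n => //; exists V; split=> //; split=> //.
by exists (e n (h x n)); split=> //; exists (h x n).
Qed.

Record dspace (D : set (nat -> nat)) :=
  DPoint { dfun : nat -> nat; dshift : nat; dfunP : D dfun }.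

HB.instance Definition _ D := gen_eqMixin (dspace D).
HB.instance Definition _ D := gen_choiceMixin (dspace D).

(* dcode embeds dspace D into Baire space, whose topology it inherits (dopen).
   The shift by dshift p lets one point exceed a given function everywhere, not
   only eventually (dspace_dominates). *)
Definition dcode D (p : dspace D) (n : nat) : nat :=
  if n is m.+1 then dfun p m + dshift p else dshift p.

Definition dcylinder D (p : dspace D) (n : nat) : set (dspace D) :=
  [set q | forall i, (i < n)%N -> dcode q i = dcode p i].

Definition dopen D (U : set (dspace D)) : Prop :=
  forall p, U p -> exists n, dcylinder p n `<=` U.

Lemma dopenT D : dopen [set: dspace D].
Proof. by move=> p _; exists 0%N. Qed.

Lemma dopenI D : setI_closed (@dopen D).
Proof.
move=> U V oU oV p [Up Vp].
have [n hn] := oU _ Up; have [m hm] := oV _ Vp.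
exists (maxn n m) => q hq; split.
  by apply: hn => i lt; apply: hq; rewrite leq_max lt.
by apply: hm => i lt; apply: hq; rewrite leq_max lt orbT.
Qed.

Lemma dopen_bigcup D (I : Type) (f : I -> set (dspace D)) :
  (forall i, dopen (f i)) -> dopen (\bigcup_i f i).
Proof.
move=> hf p [i _ fip]; have [n hn] := hf i _ fip.
by exists n => q /hn fq; exists i.
Qed.

HB.instance Definition _ D :=
  isOpenTopological.Build (dspace D) (@dopenT D) (@dopenI D) (@dopen_bigcup D).

Lemma dspace_openE D (U : set (dspace D)) : open U = dopen U.
Proof. by []. Qed.

Lemma dcode_inj D : injective (@dcode D).
Proof.
move=> [f k Df] [f' k' Df'] e.
have ek : k = k' by have := congr1 (fun c => c 0%N) e.
subst k'; have ef : f = f'.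
  by apply: funext => m; have /addIn := congr1 (fun c => c m.+1) e.
by subst f'; congr DPoint; exact: Prop_irrelevance.
Qed.

Lemma open_dcylinder D (p : dspace D) n : open (dcylinder p n).
Proof. by rewrite dspace_openE => q hq; exists n => r hr i lt; rewrite hr // hq. Qed.

Lemma dspace_accessible D : accessible_space (dspace D).
Proof.
move=> p q /eqP pq.
have /existsNP[i hi] : ~ forall i, dcode p i = dcode q i by move/funext/dcode_inj.
exists (dcylinder p i.+1); split; first exact: open_dcylinder.
  by rewrite inE.
by rewrite inE => /(_ i (ltnSn i)) e; apply: hi.
Qed.

(* Discreteness alone suffices: a point is determined by a cylinder isolating it. *)
Lemma dspace_countable_extent D : countable_extent (dspace D).
Proof.
move=> A [_ disc].
have /choice[n hn] (a : dspace D) :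
    exists n : nat, A a -> forall b, A b -> dcylinder a n b -> b = a.
  have [Aa|nAa] := EM (A a); last by exists 0%N.
  have [U [+ [Ua UA]]] := disc a Aa; rewrite dspace_openE => /(_ a Ua)[n hn].
  exists n => _ b Ab /hn Ub.
  by have : (U `&` A) b by []; rewrite UA.
apply/countable_injP; exists (fun a => pickle (n a, mkseq (dcode a) (n a))) => a b.
rewrite !inE => Aa Ab /(pcan_inj pickleK_inv) [en es].
apply/esym/(hn a Aa b Ab) => i lt.
have := congr1 (nth 0%N ^~ i) es.
by rewrite nth_mkseq // nth_mkseq // -en.
Qed.

Lemma dspace_dominates D : cofinal_family D ->
  forall G : nat -> nat, exists p : dspace D, forall n, (G n < dcode p n.+1)%N.
Proof.
move=> cof G; have [f Df [N hN]] := cof (fun n => (G n).+1).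
exists (DPoint ((\max_(i < N) G i).+1) Df) => n /=.
have [nN|/hN] := ltnP n N; last by move/leq_trans; apply; rewrite leq_addr.
by rewrite ltn_addl // ltnS (@leq_bigmax _ (fun i : 'I_N => G i) (Ordinal nN)).
Qed.

Lemma dspace_card D : cofinal_family D -> card_le_omega1 D ->
  card_eq_omega1 [set: dspace D].
Proof.
move=> cof cD; split.
  apply: (card_le_omega1_inj (psi := fun p => (dfun p, dshift p)))
    (card_le_omega1_setXT cD).
    move=> [f k Df] [f' k' Df'] _ _ [/= ef ek]; subst f' k'.
    by congr DPoint; exact: Prop_irrelevance.
  by move=> p _; split=> //; exact: dfunP.
move=> /countable_injP[c cinj].
have /choice[G hG] n : exists m, forall p : dspace D, c p = n -> dcode p n.+1 = m.
  have [[p cp]|nex] := EM (exists p : dspace D, c p = n); last first.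
    by exists 0%N => p cp; exfalso; apply: nex; exists p.
  exists (dcode p n.+1) => q cq.
  by have -> // : q = p by apply: cinj; rewrite ?inE // cp cq.
have [p hp] := dspace_dominates cof G.
by have := hp (c p); rewrite (hG _ p erefl) ltnn.
Qed.

Lemma dspace_not_set_strongly_star_Menger D : cofinal_family D ->
  ~ set_strongly_star_Menger (dspace D).
Proof.
move=> cof ssm.
have [p0 _] := dspace_dominates cof (fun _ => 0%N).
pose Us n := [set [set q : dspace D | dcode q n.+1 = k] | k in [set: nat]].
have [||F [hF cover]] := ssm [set: dspace D] (ex_intro _ p0 I) Us.
- move=> n _ [k _ <-]; rewrite dspace_openE => p pk; exists n.+2 => q hq.
  exact: (eq_trans (hq n.+1 (ltnSn _)) pk).
- move=> n p _; exists [set q | dcode q n.+1 = dcode p n.+1] => //.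
  by exists (dcode p n.+1).
have /choice[G hG] n : exists M, forall q, F n q -> (dcode q n.+1 <= M)%N.
  have [X ->] := finite_fsetP.1 (hF n).1.
  by exists (\max_(q <- finmap.enum_fset X) dcode q n.+1) => q Xq; apply: leq_bigmax_seq.
have [p hp] := dspace_dominates cof G.
have [n _ [_ [[k _ <-] [[q [qk Fq]] pk]]]] := cover p I.
by have := hp n; rewrite pk -qk ltnNge hG.
Qed.

Theorem corollary2p2 :
  omega1_lt_dominating <->
  (forall T : topologicalType,
      accessible_space T ->
      card_eq_omega1 [set: T] ->
      countable_extent T ->
      set_strongly_star_Menger T).
Proof.
split=> [hd T T1 [cardT _]|ssm D cof cardD].
  exact: set_strongly_star_Menger_of_omega1_lt_d.
apply: (dspace_not_set_strongly_star_Menger cof).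
exact: ssm (@dspace_accessible D) (dspace_card cof cardD) (@dspace_countable_extent D).
Qed.
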